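(* Let $x,y_1,\dots,y_k$ be pairwise distinct commuting indeterminates. Then, as an identity of operators on $\mathbb{V}_N$ with coefficients in the rational function field $\mathbb{C}(x,y_1,\dots,y_k)$, $$A(x)C(y_k)\cdots C(y_1)=\frac{C(y_k)\cdots C(y_1)A(x)}{(x-y_k)\cdots(x-y_1)}-\sum_{i=1}^k\frac{C(y_k)\cdots C(y_{i+1})\,C(x)\,C(y_{i-1})\cdots C(y_1)\,A(y_i)}{(x-y_i)\prod_{j\ne i}(y_i-y_j)},$$ i.e. in the $i$-th summand the factor $C(y_i)$ is replaced by $C(x)$.
   Context: Fix $N\ge2$. $V=\mathbb{C}^2$ with basis $v_0,v_1$, ${\bf P}=\mathbb{C}[t_1,\dots,t_N]$, $\mathbb{V}_N=V^{\otimes N}\otimes{\bf P}$. Matrices on $V\otimes V$ are in the ordered basis $v_0\otimes v_0,v_0\otimes v_1,v_1\otimes v_0,v_1\otimes v_1$ (columns = images); $L(x,t)=\begin{pmatrix}1&0&0&0\\0&x+t&1&0\\0&1&0&0\\0&0&0&1\end{pmatrix}$. On $V[x]\otimes\mathbb{V}_N$ (factors $0,\dots,N$) let $M(x)=L_{0N}(x,t_N)\cdots L_{01}(x,t_1)$, with $L_{0j}(x,t_j)$ acting as $L(x,t_j)$ on factors $0,j$ (factor $0$ first) and trivially elsewhere. Define operators $A(x),C(x)$ on $\mathbb{V}_N[x]$ (polynomial in $x$) by $M(x)(v_0\otimes w)=v_0\otimes A(x)w+v_1\otimes C(x)w$; $A(y),C(y)$ denote the same operators with $x$ replaced by $y$.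 *)

From HB Require Import structures.
From mathcomp Require Import all_boot all_order all_algebra all_field.
From mathcomp Require Import mpoly.
Set Implicit Arguments. Unset Strict Implicit. Unset Printing Implicit Defensive.
Import Order.TTheory GRing.Theory Num.Theory.
Local Open Scope ring_scope.

(* Basis of V = C^2: v_0 <-> false, v_1 <-> true.
   A basis vector of V^{(x)N} is a state s : 'I_N -> bool (factor j+1 of the
   paper is index j : 'I_N).  An element of V^{(x)N} (x) R is a coefficient
   function w : ('I_N -> bool) -> R; an element of V (x) V^{(x)N} (x) R
   (factor 0 = auxiliary space) is u : bool -> ('I_N -> bool) -> R. *)

Section Monodromy.
Variable R : comNzRingType.
Variable N : nat.

Definition state := 'I_N -> bool.
Definition vecN := state -> R.
Definition vec0N := bool -> state -> R.

(* matrix entry of L(x,t) on V (x) V, row (r0,rj), column (c0,cj);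
   ordered basis v0v0, v0v1, v1v0, v1v1, columns = images:
   L(v0v0) = v0v0, L(v0v1) = (x+t) v0v1 + v1v0, L(v1v0) = v0v1,
   L(v1v1) = v1v1. *)
Definition Lent (x t : R) (r0 rj c0 cj : bool) : R :=
  match c0, cj, r0, rj with
  | false, false, false, false => 1
  | false, true,  false, true  => x + t
  | false, true,  true,  false => 1
  | true,  false, false, true  => 1
  | true,  true,  true,  true  => 1
  | _, _, _, _ => 0
  end.

Definition setst (s : state) (j : 'I_N) (b : bool) : state :=
  fun i => if i == j then b else s i.

Definition L0 (x : R) (t : 'I_N -> R) (j : 'I_N) (u : vec0N) : vec0N :=
  fun a' s' => \sum_(a : bool) \sum_(b : bool)
     Lent x (t j) a' (s' j) a b * u a (setst s' j b).

(* M(x) = L_{0N}(x,t_N) ... L_{01}(x,t_1): L_{01} is applied first. *)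
Definition Mop (x : R) (t : 'I_N -> R) (u : vec0N) : vec0N :=
  foldl (fun v j => L0 x t j v) u (enum 'I_N).

Definition v0tensor (w : vecN) : vec0N := fun a s => if a then 0 else w s.

(* M(x)(v_0 (x) w) = v_0 (x) A(x) w + v_1 (x) C(x) w *)
Definition Aop (x : R) (t : 'I_N -> R) (w : vecN) : vecN :=
  fun s => Mop x t (v0tensor w) false s.
Definition Cop (x : R) (t : 'I_N -> R) (w : vecN) : vecN :=
  fun s => Mop x t (v0tensor w) true s.

(* C(y_k) ... C(y_1) w  (C(y_1) applied first), y : 'I_k -> R *)
Definition Cprod (k : nat) (y : 'I_k -> R) (t : 'I_N -> R) (w : vecN) : vecN :=
  foldl (fun v i => Cop (y i) t v) w (enum 'I_k).

End Monodromy.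

(* The concrete coefficient field C(x, y_1, ..., y_k): rational functions
   in k+1 indeterminates over algC, with x = X_0 and y_i = X_i (i = 1..k). *)
Definition Kxy (k : nat) : fieldType := {fraction {mpoly algC[k.+1]}}.
Definition xind (k : nat) : Kxy k := FracField.tofrac ('X_(ord0) : {mpoly algC[k.+1]}).
Definition yind (k : nat) (i : 'I_k) : Kxy k :=
  FracField.tofrac ('X_(lift ord0 i) : {mpoly algC[k.+1]}).

Definition Rt (k N : nat) := {mpoly (Kxy k)[N]}.
Definition tind (k N : nat) (j : 'I_N) : Rt k N := 'X_j.

(* Write R(z) := L(z, 0).  Every local operator satisfies the RTT relation
   R(x - y) L_{0j}(x) L_{0'j}(y) = L_{0'j}(y) L_{0j}(x) on the auxiliary spaces 0, 0' and
   site j (a finite check), and operators at different sites commute; appending the sites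
   one at a time, the monodromy satisfies it on v_0 (x) v_0 (x) w, where its entries read
   C(x) C(y) = C(y) C(x) and (x - y) A(x) C(y) + C(x) A(y) = C(y) A(x).  Moving A(x) past
   the last factor C(y_k) with the second relation leaves A(x) and A(y_k) in front of
   C(y_{k-1}) ... C(y_1), where the formula for k - 1 applies; the commutativity of the C's
   and the partial fraction identity
   1/((x - y_i)(y_i - y_k)) = (1/(x - y_i) - 1/(y_k - y_i)) / (x - y_k)
   reassemble the result. *)

From HB Require Import structures.
From mathcomp Require Import all_boot all_order all_algebra all_field.
From mathcomp Require Import mpoly.
From mathcomp Require Import ring.
From Stdlib Require Import FunctionalExtensionality.
Set Implicit Arguments. Unset Strict Implicit. Unset Printing Implicit Defensive.
Import GRing.Theory.
Local Open Scope ring_scope.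

Lemma widen_ord_eq k (i j : 'I_k) :
  (widen_ord (leqnSn k) i == widen_ord (leqnSn k) j) = (i == j).
Proof. by []. Qed.

Lemma ord_max_widen_neq k (i : 'I_k) : (ord_max == widen_ord (leqnSn k) i) = false.
Proof. by rewrite -val_eqE /= gtn_eqF. Qed.

Definition partial_fraction (K : fieldType) k (x : K) (y : 'I_k -> K) (i : 'I_k) : K :=
  ((x - y i) * \prod_(j < k | j != i) (y i - y j))^-1.

Section PartialFractions.
Variables (K : fieldType) (k : nat) (x : K) (y : 'I_k.+1 -> K).
Let y' i := y (widen_ord (leqnSn k) i).

Lemma prod_ordSr_inv :
  (\prod_(i < k.+1) (x - y i))^-1 = (x - y ord_max)^-1 * (\prod_(i < k) (x - y' i))^-1.
Proof. by rewrite big_ord_recr invfM mulrC. Qed.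

Lemma partial_fraction_ord_max :
  partial_fraction x y ord_max =
  (x - y ord_max)^-1 * (\prod_(i < k) (y ord_max - y' i))^-1.
Proof.
rewrite /partial_fraction invfM; congr (_ * _^-1).
rewrite big_mkcond big_ord_recr /= eqxx mulr1.
by apply: eq_bigr => i _; rewrite eq_sym ord_max_widen_neq.
Qed.

Lemma partial_fraction_widen i : injective y -> (forall j, x != y j) ->
  partial_fraction x y (widen_ord (leqnSn k) i) =
  (x - y ord_max)^-1 * (partial_fraction x y' i - partial_fraction (y ord_max) y' i).
Proof.
move=> y_inj x_y; rewrite /partial_fraction -/(y' i).
have -> : \prod_(j < k.+1 | j != widen_ord (leqnSn k) i) (y' i - y j) =
          \prod_(j < k | j != i) (y' i - y' j) * (y' i - y ord_max).
  by rewrite big_mkcond big_ord_recr ord_max_widen_neq /= [in RHS]big_mkcond.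
have P_neq0 : \prod_(j < k | j != i) (y' i - y' j) != 0.
  by apply/prodf_neq0 => j ji; rewrite subr_eq0 (inj_eq y_inj) widen_ord_eq eq_sym.
have ym_neq : y ord_max - y' i != 0 by rewrite subr_eq0 (inj_eq y_inj) ord_max_widen_neq.
have x_neq j : x - y j != 0 by rewrite subr_eq0.
by field; apply/and5P; split => //; [exact: x_neq | rewrite -opprB oppr_eq0].
Qed.

End PartialFractions.

Section Monodromy.
Variables (R : comNzRingType) (N : nat) (t : 'I_N -> R).

Definition monodromy (l : seq 'I_N) (x : R) (u : vec0N R N) : vec0N R N :=
  foldl (fun v j => L0 x t j v) u l.

Definition double_monodromy l x y (w : vecN R N) (a b : bool) : vecN R N :=
  monodromy l x (v0tensor (monodromy l y (v0tensor w) b)) a.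

Lemma setst_id (s : state N) j b c : setst (setst s j b) j c = setst s j c.
Proof. by apply: functional_extensionality => i; rewrite /setst; case: eqP. Qed.

Lemma setst_eq (s : state N) j b : setst s j b j = b.
Proof. by rewrite /setst eqxx. Qed.

Lemma setst_neq (s : state N) i j b : i != j -> setst s i b j = s j.
Proof. by rewrite /setst eq_sym => /negbTE->. Qed.

Lemma setstC (s : state N) i j b c : i != j ->
  setst (setst s i b) j c = setst (setst s j c) i b.
Proof.
move=> ij; apply: functional_extensionality => k; rewrite /setst.
by case: (eqVneq k j) => [->|//]; rewrite eq_sym (negbTE ij).
Qed.

(* [site_op j c g] acts on site j through the kernel [c], whose first index is that of a
   second auxiliary space; [L0] at any other site commutes with it. *)
Definition site_op j (c : bool -> bool -> bool -> R) (g : bool -> vec0N R N) : vec0N R N :=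
  fun a s => \sum_(b : bool) \sum_(e : bool) c b (s j) e * g b a (setst s j e).

Lemma L0_site_op x i j c g : i != j ->
  L0 x t i (site_op j c g) = site_op j c (fun b => L0 x t i (g b)).
Proof.
move=> ij; have ji : j != i by rewrite eq_sym.
apply: functional_extensionality => a; apply: functional_extensionality => s.
by rewrite /L0 /site_op !big_bool /= !setst_neq // !(setstC _ _ _ ij); ring.
Qed.

Lemma monodromy_site_op l x j c g : j \notin l ->
  monodromy l x (site_op j c g) = site_op j c (fun b => monodromy l x (g b)).
Proof.
elim: l g => [//|i l IH] g; rewrite inE negb_or => /andP[ji jl].
by rewrite /monodromy /= L0_site_op 1?eq_sym // -/(monodromy _ _ _) IH.
Qed.

Lemma v0tensor_site_op j c (h : bool -> vecN R N) :
  v0tensor (fun s => \sum_(b : bool) \sum_(e : bool) c b (s j) e * h b (setst s j e))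
  = site_op j c (fun b => v0tensor (h b)).
Proof.
apply: functional_extensionality => a; apply: functional_extensionality => s.
case: a; rewrite /v0tensor /site_op //.
by rewrite big1 // => b _; rewrite big1 // => e _; rewrite mulr0.
Qed.

Lemma double_monodromy_rcons l j x y w a b s : j \notin l ->
  double_monodromy (rcons l j) x y w a b s =
  \sum_(a' : bool) \sum_(c : bool) Lent x (t j) a (s j) a' c *
    \sum_(b' : bool) \sum_(e : bool) Lent y (t j) b c b' e *
      double_monodromy l x y w a' b' (setst s j e).
Proof.
move=> jl; rewrite /double_monodromy /monodromy !foldl_rcons -!/(monodromy _ _ _).
rewrite (v0tensor_site_op j (fun b' sj e => Lent y (t j) b sj b' e)
                         (monodromy l y (v0tensor w))) monodromy_site_op //.
rewrite /L0 /site_op; apply: eq_bigr => a' _; apply: eq_bigr => c _; rewrite setst_eq.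
by congr (_ * _); apply: eq_bigr => b' _; apply: eq_bigr => e _; rewrite setst_id.
Qed.

Definition rtt_rel l x y := forall w a b s,
  \sum_(c : bool) \sum_(d : bool) Lent (x - y) 0 a b c d * double_monodromy l x y w c d s
  = double_monodromy l y x w b a s.

Lemma rtt_rel_nil x y : rtt_rel [::] x y.
Proof.
by move=> w [] [] s; rewrite !big_bool /double_monodromy /monodromy /v0tensor /=; ring.
Qed.

Lemma rtt_rel_rcons l j x y : j \notin l -> rtt_rel l x y -> rtt_rel (rcons l j) x y.
Proof.
move=> jl rtt w a b s; rewrite !big_bool !double_monodromy_rcons // !big_bool -!rtt !big_bool.
by case: a; case: b; case: (s j) => /=; ring.
Qed.

Lemma rtt_rel_uniq l x y : uniq l -> rtt_rel l x y.
Proof.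
elim/last_ind: l => [_|l j IH]; first exact: rtt_rel_nil.
by rewrite rcons_uniq => /andP[jl /IH]; apply: rtt_rel_rcons.
Qed.

Lemma double_monodromy_enum x y w a b :
  double_monodromy (enum 'I_N) x y w a b =
  (if a then Cop x t else Aop x t) ((if b then Cop y t else Aop y t) w).
Proof. by case: a; case: b. Qed.

Lemma Aop_Cop_exchange x y w s :
  (x - y) * Aop x t (Cop y t w) s + Cop x t (Aop y t w) s = Cop y t (Aop x t w) s.
Proof.
have := rtt_rel_uniq x y (enum_uniq 'I_N) w false true s.
by rewrite !big_bool !double_monodromy_enum /= => <-; ring.
Qed.

Lemma Cop_comm x y w : Cop x t (Cop y t w) = Cop y t (Cop x t w).
Proof.
apply: functional_extensionality => s.
have := rtt_rel_uniq x y (enum_uniq 'I_N) w true true s.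
by rewrite !big_bool !double_monodromy_enum /= => <-; ring.
Qed.

Lemma L0_sum (I : Type) (r : seq I) (c : I -> R) (u : I -> vec0N R N) x j :
  L0 x t j (fun a s => \sum_(i <- r) c i * u i a s) =
  fun a s => \sum_(i <- r) c i * L0 x t j (u i) a s.
Proof.
apply: functional_extensionality => a; apply: functional_extensionality => s.
rewrite /L0; under [RHS]eq_bigr => i _ do rewrite !big_bool.
by rewrite !big_bool !mulr_sumr -!big_split; apply: eq_bigr => i _ /=; ring.
Qed.

Lemma monodromy_sum (I : Type) (r : seq I) (c : I -> R) l x (u : I -> vec0N R N) :
  monodromy l x (fun a s => \sum_(i <- r) c i * u i a s) =
  fun a s => \sum_(i <- r) c i * monodromy l x (u i) a s.
Proof.
elim: l u => [//|j l IH] u.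
by rewrite /monodromy /= L0_sum -/(monodromy _ _ _) IH.
Qed.

Lemma v0tensor_sum (I : Type) (r : seq I) (c : I -> R) (w : I -> vecN R N) :
  v0tensor (fun s => \sum_(i <- r) c i * w i s) =
  fun a s => \sum_(i <- r) c i * v0tensor (w i) a s.
Proof.
apply: functional_extensionality => a; apply: functional_extensionality => s.
by case: a; rewrite /v0tensor // big1 // => i _; rewrite mulr0.
Qed.

Lemma Cop_sum (I : Type) (r : seq I) (c : I -> R) (w : I -> vecN R N) z s :
  Cop z t (fun s => \sum_(i <- r) c i * w i s) s = \sum_(i <- r) c i * Cop z t (w i) s.
Proof. by rewrite /Cop /Mop v0tensor_sum -/(monodromy _ _ _) monodromy_sum. Qed.

Lemma Cop_lincomb (I : Type) (r : seq I) a (v : vecN R N) (b : I -> R)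
    (w : I -> vecN R N) z s :
  Cop z t (fun s => a * v s - \sum_(i <- r) b i * w i s) s =
  a * Cop z t v s - \sum_(i <- r) b i * Cop z t (w i) s.
Proof.
pose c o := if o is Some i then - b i else a.
pose u o := if o is Some i then w i else v.
have lincombE (F : option I -> R) :
    F None - \sum_(i <- r) - F (Some i) = \sum_(o <- None :: map Some r) F o.
  by rewrite big_cons big_map sumrN opprK.
have -> : (fun s => a * v s - \sum_(i <- r) b i * w i s) =
          (fun s => \sum_(o <- None :: map Some r) c o * u o s).
  apply: functional_extensionality => s'.
  rewrite -(lincombE (fun o => c o * u o s')); congr (_ - _).
  by apply: eq_bigr => i _; rewrite mulNr opprK.
rewrite Cop_sum -(lincombE (fun o => c o * Cop z t (u o) s)); congr (_ - _).
by apply: eq_bigr => i _; rewrite mulNr opprK.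
Qed.

Definition Cfold (v : vecN R N) (zs : seq R) : vecN R N :=
  foldl (fun v z => Cop z t v) v zs.

Lemma Cprod_Cfold k (y : 'I_k -> R) w : Cprod y t w = Cfold w (map y (enum 'I_k)).
Proof. by rewrite /Cprod /Cfold; elim: (enum 'I_k) w => //= i e IH w; rewrite IH. Qed.

Lemma Cop_Cfold z v zs : Cop z t (Cfold v zs) = Cfold (Cop z t v) zs.
Proof. by elim: zs v => [//|z' zs IH] v /=; rewrite IH Cop_comm. Qed.

Lemma Cfold_cat_cons v zs1 z zs2 :
  Cfold v (zs1 ++ z :: zs2) = Cop z t (Cfold v (zs1 ++ zs2)).
Proof. by rewrite /Cfold !foldl_cat /= -!/(Cfold _ _) !Cop_Cfold. Qed.

Lemma Cprod_ord0 (y : 'I_0 -> R) w : Cprod y t w = w.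
Proof. by rewrite /Cprod enum_ord0. Qed.

Lemma Cprod_ordSr k (y : 'I_k.+1 -> R) w :
  Cprod y t w = Cop (y ord_max) t (Cprod (fun i => y (widen_ord (leqnSn k) i)) t w).
Proof. by rewrite !Cprod_Cfold enum_ordSr map_rcons -map_comp /Cfold foldl_rcons. Qed.

Section CprodUpdate.
Variables (K : eqType) (g : K -> R) (k : nat).

Lemma Cprod_ordSr_update (y : 'I_k.+1 -> K) i z v :
  Cprod (fun j => g (if j == widen_ord (leqnSn k) i then z else y j)) t v =
  Cop (g (y ord_max)) t
    (Cprod (fun j => g (if j == i then z else y (widen_ord (leqnSn k) j))) t v).
Proof. by rewrite Cprod_ordSr ord_max_widen_neq. Qed.

Lemma Cprod_ordSr_update_max (y : 'I_k.+1 -> K) z v :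
  Cprod (fun j => g (if j == ord_max then z else y j)) t v =
  Cop (g z) t (Cprod (fun j => g (y (widen_ord (leqnSn k) j))) t v).
Proof.
rewrite Cprod_ordSr eqxx; congr (Cop _ t (Cprod _ t v)).
by apply: functional_extensionality => j; rewrite eq_sym ord_max_widen_neq.
Qed.

Lemma Cop_Cprod_swap (y : 'I_k -> K) i z u v :
  Cop (g z) t (Cprod (fun j => g (if j == i then u else y j)) t v) =
  Cop (g u) t (Cprod (fun j => g (if j == i then z else y j)) t v).
Proof.
have ie : i \in enum 'I_k by rewrite mem_enum.
case/splitPr ue: {1}(enum 'I_k) / ie => [e1 e2].
have := enum_uniq 'I_k; rewrite ue cat_uniq /= negb_or.
case/and4P=> _ /andP[ie1 _] ie2 _.
have updateE u' : map (fun j => g (if j == i then u' else y j)) (enum 'I_k) =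
    map (g \o y) e1 ++ g u' :: map (g \o y) e2.
  rewrite ue map_cat /= eqxx; congr (_ ++ _ :: _); apply/eq_in_map => j /= je.
    by case: eqP je => // ->; rewrite (negbTE ie1).
  by case: eqP je => // ->; rewrite (negbTE ie2).
by rewrite !Cprod_Cfold !updateE !Cfold_cat_cons Cop_comm.
Qed.

End CprodUpdate.

Section FieldCoefficients.
Variables (K : fieldType) (f : {rmorphism K -> R}).

Lemma Aop_Cop (x y : K) v s : x != y ->
  Aop (f x) t (Cop (f y) t v) s =
  f (x - y)^-1 * (Cop (f y) t (Aop (f x) t v) s - Cop (f x) t (Aop (f y) t v) s).
Proof.
move=> xy; rewrite -(Aop_Cop_exchange (f x)) addrK mulrA -rmorphB -rmorphM.
by rewrite mulVf ?subr_eq0 // rmorph1 mul1r.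
Qed.

Lemma Aop_Cprod k (x : K) (y : 'I_k -> K) : injective y -> (forall i, x != y i) ->
  forall w s,
  Aop (f x) t (Cprod (fun i => f (y i)) t w) s =
  f (\prod_(i < k) (x - y i))^-1 * Cprod (fun i => f (y i)) t (Aop (f x) t w) s
  - \sum_(i < k) f (partial_fraction x y i)
      * Cprod (fun j => f (if j == i then x else y j)) t (Aop (f (y i)) t w) s.
Proof.
elim: k x y => [|k IH] x y y_inj x_y w s.
  by rewrite !Cprod_ord0 !big_ord0 invr1 rmorph1 mul1r subr0.
pose y' i := y (widen_ord (leqnSn k) i).
have y'_inj : injective y' by move=> i j /y_inj/eqP; rewrite widen_ord_eq => /eqP.
have ym_y' i : y ord_max != y' i by rewrite (inj_eq y_inj) ord_max_widen_neq.
have IHx := functional_extensionality _ _ (IH x y' y'_inj (fun i => x_y _) w).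
have IHy := functional_extensionality _ _ (IH (y ord_max) y' y'_inj ym_y' w).
rewrite Cprod_ordSr Aop_Cop // IHx IHy !Cop_lincomb.
under [X in _ - (_ - X)]eq_bigr => i _ do rewrite Cop_Cprod_swap.
rewrite prod_ordSr_inv Cprod_ordSr big_ord_recr /= Cprod_ordSr_update_max.
rewrite partial_fraction_ord_max.
under [X in _ = _ - (X + _)]eq_bigr => i _ do
  rewrite Cprod_ordSr_update partial_fraction_widen // rmorphM rmorphB -mulrA mulrBl.
rewrite -mulr_sumr sumrB !rmorphM /y'.
ring.
Qed.

End FieldCoefficients.

End Monodromy.

Lemma mpolyX_inj (R : nzRingType) n : injective (fun i : 'I_n => 'X_i : {mpoly R[n]}).
Proof.
move=> i j /= /(congr1 (mcoeff U_(i))); rewrite !mcoeffXU eqxx eq_sym.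
by case: eqP => // _ /eqP; rewrite oner_eq0.
Qed.

Lemma yind_inj k : injective (@yind k).
Proof. by move=> i j /eqP; rewrite tofrac_eq => /eqP/mpolyX_inj/lift_inj. Qed.

Lemma xind_neq_yind k (i : 'I_k) : xind k != yind i.
Proof. by rewrite tofrac_eq (inj_eq (@mpolyX_inj _ _)) neq_lift. Qed.

Theorem lemma2p8 (N k : nat) (hN : (2 <= N)%N)
    (w : vecN (Rt k N) N) (s : state N) :
  let x := xind k in
  let y := yind (k:=k) in
  let t := tind k (N:=N) in
  Aop (x%:MP) t (Cprod (fun i => (y i)%:MP) t w) s
  = ((\prod_(i < k) (x - y i))^-1)%:MP
        * Cprod (fun i => (y i)%:MP) t (Aop (x%:MP) t w) s
    - \sum_(i < k)
        (((x - y i) * \prod_(j < k | j != i) (y i - y j))^-1)%:MP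
        * Cprod (fun j => (if j == i then x else y j)%:MP) t
                (Aop ((y i)%:MP) t w) s.
Proof.
(* The identity holds for every N. *)
exact: Aop_Cprod (@yind_inj k) (@xind_neq_yind k) w s.
Qed.
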